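(* Consider the parametrized system described in the context, assume $m_x\ge m_\xi$, and let $\Gamma\in\mathbb{R}^{m_y\times m_\xi}$ be a given right tangential interpolation matrix at $(\Xi,\Pi)$. Then a value $\theta\in\mathbf\Theta$ is consistent with $\Gamma$ if and only if the equation $$\begin{bmatrix}A(\theta)&B(\theta)\\ C(\theta)&D(\theta)\end{bmatrix}\begin{bmatrix}T_1\\ \Pi\end{bmatrix}=\begin{bmatrix}T_1\Xi\\ \Gamma\end{bmatrix}$$ has a solution $T_1\in\mathbb{R}^{m_x\times m_\xi}$ of full column rank.
   Context: Integers $m_x,m_u,m_y,m_v,m_z,m_\theta,m_\xi\ge 1$ are given, together with real matrices $A_{xx}\in\mathbb{R}^{m_x\times m_x}$, $B_{xu}\in\mathbb{R}^{m_x\times m_u}$, $B_{xv}\in\mathbb{R}^{m_x\times m_v}$, $C_{yx}\in\mathbb{R}^{m_y\times m_x}$, $C_{zx}\in\mathbb{R}^{m_z\times m_x}$, $D_{zu}\in\mathbb{R}^{m_z\times m_u}$, $D_{zv}\in\mathbb{R}^{m_z\times m_v}$, $D_{yu}\in\mathbb{R}^{m_y\times m_u}$, $D_{yv}\in\mathbb{R}^{m_y\times m_v}$ and $P_0,\dots,P_{m_\theta}\in\mathbb{R}^{m_v\times m_z}$. For $\theta\in\mathbb{R}^{m_\theta}$ put $P(\theta)=P_0+\sum_{i=1}^{m_\theta}\theta_iP_i$ and $$\begin{bmatrix}A(\theta)&B(\theta)\\ C(\theta)&D(\theta)\end{bmatrix}=\begin{bmatrix}A_{xx}&B_{xu}\\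 C_{yx}&D_{yu}\end{bmatrix}+\begin{bmatrix}B_{xv}\\ D_{yv}\end{bmatrix}[I_{m_v}-P(\theta)D_{zv}]^{-1}P(\theta)\begin{bmatrix}C_{zx}&D_{zu}\end{bmatrix},$$ the system matrices of $\dot x=A(\theta)x+B(\theta)u$, $y=C(\theta)x+D(\theta)u$. A compact set $\mathbf{\Theta}\subset\mathbb{R}^{m_\theta}$ is given with $I_{m_v}-P(\theta)D_{zv}$ invertible for all $\theta\in\mathbf\Theta$. Matrices $\Xi\in\mathbb{R}^{m_\xi\times m_\xi}$, $\Pi\in\mathbb{R}^{m_u\times m_\xi}$ are given. A value $\theta$ is called consistent with $\Gamma$ if the system with matrices $A(\theta),B(\theta),C(\theta),D(\theta)$ matches $\Gamma$ in the following sense: there exist a nonsingular $T\in\mathbb{R}^{m_x\times m_x}$ and real matrices $G\in\mathbb{R}^{m_\xi\times m_u}$, $Z\in\mathbb{R}^{m_\xi\times(m_x-m_\xi)}$, $S\in\mathbb{R}^{(m_x-m_\xi)\times m_u}$, $F\in\mathbb{R}^{(m_x-m_\xi)\times(m_x-m_\xi)}$, $K\in\mathbb{R}^{m_y\times m_u}$, $H\in\mathbb{R}^{m_y\times(m_x-m_\xi)}$ with $$\begin{bmatrix}A(\theta)&B(\theta)\\ C(\theta)&D(\theta)\end{bmatrix}=\begin{bmatrix}T&0\\0&I_{m_y}\end{bmatrix}\begin{bmatrix}\Xi-G\Pi&Z&G\\ -S\Pi&F&S\\ \Gamma-K\Pi&H&K\end{bmatrix}\begin{bmatrix}T^{-1}&0\\0&I_{m_u}\end{bmatrix}.$$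 *)

From HB Require Import structures.
From mathcomp Require Import all_boot all_order all_algebra.
From mathcomp Require Import all_classical all_reals all_analysis.
Set Implicit Arguments. Unset Strict Implicit. Unset Printing Implicit Defensive.
Import Order.TTheory GRing.Theory Num.Theory.
Import numFieldNormedType.Exports.
Local Open Scope ring_scope.

Definition Pth (R : realType) (mv mz mt : nat)
  (P0 : 'M[R]_(mv, mz)) (Ps : 'I_mt -> 'M[R]_(mv, mz)) (th : 'rV[R]_mt)
  : 'M[R]_(mv, mz) :=
  P0 + \sum_(i < mt) th 0 i *: Ps i.

(* The full system matrix [A(θ) B(θ); C(θ) D(θ)] as an LFT. *)
Definition sysmx (R : realType) (mx mu my mv mz mt : nat)
  (Axx : 'M[R]_mx) (Bxu : 'M[R]_(mx, mu)) (Bxv : 'M[R]_(mx, mv))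
  (Cyx : 'M[R]_(my, mx)) (Czx : 'M[R]_(mz, mx))
  (Dzu : 'M[R]_(mz, mu)) (Dzv : 'M[R]_(mz, mv))
  (Dyu : 'M[R]_(my, mu)) (Dyv : 'M[R]_(my, mv))
  (P0 : 'M[R]_(mv, mz)) (Ps : 'I_mt -> 'M[R]_(mv, mz)) (th : 'rV[R]_mt)
  : 'M[R]_(mx + my, mx + mu) :=
  let P := Pth P0 Ps th in
  block_mx Axx Bxu Cyx Dyu
  + col_mx Bxv Dyv *m invmx (1%:M - P *m Dzv) *m P *m row_mx Czx Dzu.

Definition midmx (R : realType) (mx mu my mxi : nat) (Hle : (mxi <= mx)%N)
  (Xi : 'M[R]_mxi) (Pi : 'M[R]_(mu, mxi)) (Gam : 'M[R]_(my, mxi))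
  (G : 'M[R]_(mxi, mu)) (Z : 'M[R]_(mxi, mx - mxi)) (S : 'M[R]_(mx - mxi, mu))
  (F : 'M[R]_(mx - mxi)) (K : 'M[R]_(my, mu)) (H : 'M[R]_(my, mx - mxi))
  : 'M[R]_(mx + my, mx + mu) :=
  let E : (mxi + (mx - mxi) = mx)%N := subnKC Hle in
  castmx (f_equal (addn^~ my) E, f_equal (addn^~ mu) E)
    (col_mx
       (col_mx (row_mx (row_mx (Xi - G *m Pi) Z) G)
               (row_mx (row_mx (- (S *m Pi)) F) S))
       (row_mx (row_mx (Gam - K *m Pi) H) K)).

Definition consistent (R : realType) (mx mu my mxi : nat) (Hle : (mxi <= mx)%N)
  (Xi : 'M[R]_mxi) (Pi : 'M[R]_(mu, mxi)) (Gam : 'M[R]_(my, mxi))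
  (M : 'M[R]_(mx + my, mx + mu)) : Prop :=
  exists (T : 'M[R]_mx) (G : 'M[R]_(mxi, mu)) (Z : 'M[R]_(mxi, mx - mxi))
         (S : 'M[R]_(mx - mxi, mu)) (F : 'M[R]_(mx - mxi))
         (K : 'M[R]_(my, mu)) (H : 'M[R]_(my, mx - mxi)),
    T \in unitmx /\
    M = block_mx T 0 0 1%:M *m midmx Hle Xi Pi Gam G Z S F K H
        *m block_mx (invmx T) 0 0 1%:M.

From HB Require Import structures.
From mathcomp Require Import all_boot all_order all_algebra.
From mathcomp Require Import all_classical all_reals all_analysis.
Import Order.TTheory GRing.Theory Num.Theory.
Import numFieldNormedType.Exports.
Set Implicit Arguments.
Unset Strict Implicit.
Unset Printing Implicit Defensive.

Local Open Scope ring_scope.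

(* A full-column-rank T1 is T [I; 0] for some
   nonsingular T, and the state transformation by T turns the interpolation
   equation for T1 into the same equation for [I; 0]. Writing T^-1 B = [G; S]
   and D = K, that equation says exactly that the first m_xi columns of
   T^-1 A T are [Xi - G Pi; -S Pi] and those of C T are Gam - K Pi. *)

Section TangentialInterpolation.

Variables (F : fieldType) (k n p q : nat).
Variables (Xi : 'M[F]_k) (Pi : 'M[F]_(q, k)) (Gam : 'M[F]_(p, k)).

Definition interpolates (M : 'M[F]_(k + n + p, k + n + q))
    (T1 : 'M[F]_(k + n, k)) : Prop :=
  M *m col_mx T1 Pi = col_mx (T1 *m Xi) Gam.

Definition interp_form (G : 'M[F]_(k, q)) (Z : 'M[F]_(k, n))
    (S : 'M[F]_(n, q)) (Fm : 'M[F]_n) (K : 'M[F]_(p, q)) (H : 'M[F]_(p, n))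
    : 'M[F]_(k + n + p, k + n + q) :=
  col_mx
    (col_mx (row_mx (row_mx (Xi - G *m Pi) Z) G)
            (row_mx (row_mx (- (S *m Pi)) Fm) S))
    (row_mx (row_mx (Gam - K *m Pi) H) K).

Lemma interp_formP (N : 'M[F]_(k + n + p, k + n + q)) :
  (exists G Z S Fm K H, N = interp_form G Z S Fm K H) <->
  interpolates N (pid_mx k).
Proof.
rewrite /interpolates !pid_mx_col mul_col_mx mul1mx mul0mx.
split=> [[G [Z [S [Fm [K [H ->]]]]]]|].
  rewrite !mul_col_mx !(mul_row_col (n1 := k + n)) !(mul_row_col (n1 := k)).
  by rewrite !mulmx1 !mulmx0 !addr0 !subrK addNr.
rewrite -[N]vsubmxK -[usubmx N]vsubmxK.
set N1 := usubmx _; set N2 := dsubmx (usubmx N); set N3 := dsubmx N.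
rewrite -[N1]hsubmxK -[N2]hsubmxK -[N3]hsubmxK -[lsubmx N1]hsubmxK.
rewrite -[lsubmx N2]hsubmxK -[lsubmx N3]hsubmxK.
rewrite !mul_col_mx !(mul_row_col (n1 := k + n)) !(mul_row_col (n1 := k)).
rewrite !mulmx1 !mulmx0 !addr0 => /eq_col_mx [/eq_col_mx [E1 E2] E3].
move: E1 E2 E3 => /(canRL (addrK _)) -> /(canRL (addrK _)) -> /(canRL (addrK _)) ->.
rewrite sub0r.
by exists (rsubmx N1), (rsubmx (lsubmx N1)), (rsubmx N2), (rsubmx (lsubmx N2)),
  (rsubmx N3), (rsubmx (lsubmx N3)).
Qed.

End TangentialInterpolation.

Section StateTransformation.

Variables (F : fieldType) (m p : nat).

Definition state_mx (T : 'M[F]_m) : 'M[F]_(m + p) := block_mx T 0 0 1%:M.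

Lemma state_mx_unit (T : 'M[F]_m) : (state_mx T \in unitmx) = (T \in unitmx).
Proof. by rewrite block_diag_mx_unit unitmx1 andbT. Qed.

Lemma state_mxV (T : 'M[F]_m) : T \in unitmx ->
  invmx (state_mx T) = state_mx (invmx T).
Proof.
by move=> uT; rewrite invmx_block_diag ?state_mx_unit // invmx1.
Qed.

Lemma state_mx_col r (T : 'M[F]_m) (X : 'M[F]_(m, r)) (Y : 'M[F]_(p, r)) :
  state_mx T *m col_mx X Y = col_mx (T *m X) Y.
Proof. by rewrite mul_block_col !mul0mx mul1mx addr0 add0r. Qed.

End StateTransformation.

Lemma interpolates_conj (F : fieldType) (k n p q : nat)
    (Xi : 'M[F]_k) (Pi : 'M[F]_(q, k)) (Gam : 'M[F]_(p, k))
    (T : 'M[F]_(k + n)) (N : 'M[F]_(k + n + p, k + n + q))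
    (X : 'M[F]_(k + n, k)) : T \in unitmx ->
  interpolates Xi Pi Gam (state_mx p T *m N *m state_mx q (invmx T)) (T *m X)
  <-> interpolates Xi Pi Gam N X.
Proof.
move=> uT; have uS : state_mx p T \in unitmx by rewrite state_mx_unit.
rewrite /interpolates -mulmxA state_mx_col mulKmx // -mulmxA.
rewrite -[T *m X *m Xi]mulmxA -state_mx_col.
split=> [/(congr1 (mulmx (invmx (state_mx p T))))|->//].
by rewrite !mulKmx.
Qed.

Lemma full_col_rank_pidP (F : fieldType) (k n : nat) (T1 : 'M[F]_(k + n, k)) :
  \rank T1 = k <-> exists2 T, T \in unitmx & T1 = T *m pid_mx k.
Proof.
split=> [rT1|[T uT ->]]; last first.
  by rewrite eqmxMfull ?row_full_unit // rank_pid_mx // leq_addr.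
pose T := col_ebase T1 *m block_mx (row_ebase T1) 0 0 (1%:M : 'M[F]_n).
exists T.
  rewrite unitmx_mul col_ebase_unit unitmxE det_ublock det1 mulr1 -unitmxE.
  exact: row_ebase_unit.
rewrite -{1}(mulmx_ebase T1) rT1 /T -!mulmxA; congr (_ *m _).
by rewrite !pid_mx_col mul_block_col mul_col_mx !mulmx0 !mulmx1 mul1mx mul0mx !addr0.
Qed.

Lemma similar_interp_formP (F : fieldType) (k n p q : nat)
    (Xi : 'M[F]_k) (Pi : 'M[F]_(q, k)) (Gam : 'M[F]_(p, k))
    (M : 'M[F]_(k + n + p, k + n + q)) :
  (exists T G Z S Fm K H, T \in unitmx /\
     M = state_mx p T *m interp_form Xi Pi Gam G Z S Fm K H
         *m state_mx q (invmx T))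
  <-> exists T1, \rank T1 = k /\ interpolates Xi Pi Gam M T1.
Proof.
split=> [[T [G [Z [S [Fm [K [H [uT ->]]]]]]]]|[T1 [/full_col_rank_pidP [T uT ->]]]].
  exists (T *m pid_mx k); split; first by apply/full_col_rank_pidP; exists T.
  by apply/interpolates_conj/interp_formP => //; do 6 eexists.
set N := invmx (state_mx p T) *m M *m state_mx q T.
have MN : M = state_mx p T *m N *m state_mx q (invmx T).
  by rewrite -state_mxV // /N !mulmxA mulmxV ?mul1mx ?mulmxK ?state_mx_unit.
rewrite MN => /(interpolates_conj _ _ _ _ _ uT) /interp_formP [G [Z [S [Fm [K [H EN]]]]]].
by exists T, G, Z, S, Fm, K, H; rewrite -EN.
Qed.

Lemma consistentP (R : realType) (m p q k : nat) (Hle : (k <= m)%N)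
    (Xi : 'M[R]_k) (Pi : 'M[R]_(q, k)) (Gam : 'M[R]_(p, k))
    (M : 'M[R]_(m + p, m + q)) :
  consistent Hle Xi Pi Gam M <->
  exists T1 : 'M[R]_(m, k),
    \rank T1 = k /\ M *m col_mx T1 Pi = col_mx (T1 *m Xi) Gam.
Proof.
rewrite /consistent /midmx /=; move: (subnKC Hle); move: (m - k)%N => n E.
by clear Hle; case: m / E M => M; apply: similar_interp_formP.
Qed.

Theorem theorem2 (R : realType) (mx mu my mv mz mt mxi : nat)
  (hmx : (0 < mx)%N) (hmu : (0 < mu)%N) (hmy : (0 < my)%N) (hmv : (0 < mv)%N)
  (hmz : (0 < mz)%N) (hmt : (0 < mt)%N) (hmxi : (0 < mxi)%N)
  (Axx : 'M[R]_mx) (Bxu : 'M[R]_(mx, mu)) (Bxv : 'M[R]_(mx, mv))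
  (Cyx : 'M[R]_(my, mx)) (Czx : 'M[R]_(mz, mx))
  (Dzu : 'M[R]_(mz, mu)) (Dzv : 'M[R]_(mz, mv))
  (Dyu : 'M[R]_(my, mu)) (Dyv : 'M[R]_(my, mv))
  (P0 : 'M[R]_(mv, mz)) (Ps : 'I_mt -> 'M[R]_(mv, mz))
  (Theta : set 'rV[R]_mt) (hTheta : compact Theta)
  (hinv : forall th, Theta th -> (1%:M - Pth P0 Ps th *m Dzv) \in unitmx)
  (Xi : 'M[R]_mxi) (Pi : 'M[R]_(mu, mxi))
  (Hle : (mxi <= mx)%N) (Gam : 'M[R]_(my, mxi))
  (th : 'rV[R]_mt) (hth : Theta th) :
  consistent Hle Xi Pi Gam
    (sysmx Axx Bxu Bxv Cyx Czx Dzu Dzv Dyu Dyv P0 Ps th)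
  <->
  exists T1 : 'M[R]_(mx, mxi),
    \rank T1 = mxi /\
    sysmx Axx Bxu Bxv Cyx Czx Dzu Dzv Dyu Dyv P0 Ps th *m col_mx T1 Pi
    = col_mx (T1 *m Xi) Gam.
Proof. exact: consistentP. Qed.
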